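(* For every $n\ge1$, the map sending a nonempty finite sequence $(P_1,\dots,P_j)$ of indecomposable Dyck paths, taken up to cyclic rotation of the sequence, to the necklace of the word $P_1P_2\cdots P_j$ (each path written as a word in $\nearrow,\searrow$, i.e. in $\circ,\bullet$) is a bijection between cyclic sequences of indecomposable Dyck paths of total length $2n$ and $(1,1)$-balanced necklaces of length $2n$. Equivalently, $Cyc_{(1,1)}\simeq Cyc(\nearrow\mathcal{D}\searrow)$ as combinatorial classes (size = length). *)

(* Words over {up, down} are encoded as seq bool:
   true = up (↗, ∘), false = down (↘, •). *)
From mathcomp Require Import all_boot.
Set Implicit Arguments. Unset Strict Implicit. Unset Printing Implicit Defensive.

Definition dyck (w : seq bool) : bool :=
  (count id w == count negb w) &&
  [forall i : 'I_(size w).+1, count negb (take i w) <= count id (take i w)].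

Definition indecomposable_dyck (w : seq bool) : bool :=
  [&& dyck w, 0 < size w &
   [forall i : 'I_(size w), (0 < val i) ==>
       (count negb (take i w) < count id (take i w))]].

Definition cyc_eq (T : Type) (s t : seq T) : Prop := exists k, rot k s = t.

(* A (1,1)-balanced word: as many ∘ (weight 1) as • (weight 1). *)
Definition balanced11 (w : seq bool) : bool := count id w == count negb w.

Definition cyc_dyck_seq (n : nat) (ss : seq (seq bool)) : Prop :=
  [/\ ss != [::], all indecomposable_dyck ss & size (flatten ss) = 2 * n].

From mathcomp Require Import all_boot zify.

Set Implicit Arguments.
Unset Strict Implicit.
Unset Printing Implicit Defensive.

(* Splitting a Dyck path at its returns to height 0 factors it uniquely into
   indecomposable Dyck paths.  A balanced word becomes a Dyck path once rotated
   to start at a point of minimal height (cycle lemma), which gives surjectivity.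
   Conversely, if a rotation of a concatenation of indecomposable paths is
   again such a concatenation, the rotation starts at a point of height at
   most 0, i.e. at a return to 0, hence between two factors; uniqueness of
   the factorization then shows that the factors were rotated as a block. *)

Local Notation ups w := (count id w).
Local Notation downs w := (count negb w).

Lemma dyckP w :
  reflect (ups w = downs w /\ forall i, downs (take i w) <= ups (take i w))
          (dyck w).
Proof.
apply: (iffP andP) => [[/eqP bal /forallP prefix] | [bal prefix]].
  split=> // i; case: (leqP i (size w)) => [le_iw | lt_wi].
    exact: (prefix (Ordinal (le_iw : i < (size w).+1))).
  by rewrite take_oversize ?(ltnW lt_wi) //; have := prefix ord_max; rewrite take_size.
by split; [apply/eqP | apply/forallP].
Qed.

Lemma indecomposable_dyckP w :
  reflect [/\ dyck w, 0 < size w &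
            forall i, 0 < i < size w -> downs (take i w) < ups (take i w)]
          (indecomposable_dyck w).
Proof.
apply: (iffP and3P) => [[dw w_gt0 /forallP inner] | [dw w_gt0 inner]].
  by split=> // i /andP[i_gt0 lt_iw]; have := inner (Ordinal lt_iw); rewrite /= i_gt0.
split=> //; apply/forallP=> i; apply/implyP=> i_gt0.
by apply: inner; rewrite i_gt0 ltn_ord.
Qed.

Lemma dyck_cat u v : dyck u -> dyck v -> dyck (u ++ v).
Proof.
move=> /dyckP[bal_u pre_u] /dyckP[bal_v pre_v]; apply/dyckP; split.
  by rewrite !count_cat bal_u bal_v.
move=> i; rewrite take_cat; case: ltnP => _; first exact: pre_u.
by rewrite !count_cat bal_u leq_add2l.
Qed.

Lemma dyck_flatten ss : all indecomposable_dyck ss -> dyck (flatten ss).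
Proof.
elim: ss => [_ | s ss IHss] /=; first by apply/dyckP; split=> // i.
by case/andP=> /indecomposable_dyckP[ds _ _] /IHss; apply: dyck_cat.
Qed.

Lemma flatten_rot (T : Type) j (ss : seq (seq T)) :
  flatten (rot j ss) = rot (size (flatten (take j ss))) (flatten ss).
Proof.
have -> : flatten ss = flatten (take j ss) ++ flatten (drop j ss).
  by rewrite -flatten_cat cat_take_drop.
by rewrite rot_size_cat /rot flatten_cat.
Qed.

Lemma all_rot (T : eqType) (a : pred T) k (s : seq T) : all a (rot k s) = all a s.
Proof. by apply: perm_all; rewrite perm_rot. Qed.

(* Two indecomposable Dyck paths cannot be proper prefixes of one another:
   the shorter one would be a return to height 0 inside the longer one. *)
Lemma indecomposable_dyck_prefix a b x y :
  indecomposable_dyck a -> indecomposable_dyck b -> a ++ x = b ++ y -> a = b.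
Proof.
wlog le_ab : a b x y / size a <= size b.
  move=> hwlog ia ib eq_ab.
  case: (leqP (size a) (size b)) => [le_ab | /ltnW le_ba]; first exact: (hwlog a b x y).
  exact/esym/(hwlog b a y x).
move=> /indecomposable_dyckP[/dyckP[bal_a _] a_gt0 _] /indecomposable_dyckP[_ _ inner_b].
move/(f_equal (take (size a))); rewrite take_size_cat // take_cat.
case: ltnP le_ab => [lt_ab _ a_pref | ge_ab le_ab]; last first.
  have -> : size a = size b by lia.
  by rewrite subnn take0 cats0.
by have := inner_b (size a); rewrite a_gt0 lt_ab -a_pref bal_a ltnn => /(_ isT).
Qed.

Lemma flatten_indecomposable_inj ss tt :
  all indecomposable_dyck ss -> all indecomposable_dyck tt ->
  flatten ss = flatten tt -> ss = tt.
Proof.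
elim: ss tt => [| s ss IHss] [| t tt] //=.
- by move=> _ /andP[/indecomposable_dyckP[_ t_gt0 _] _] /(f_equal size);
    rewrite size_cat; case: (size t) t_gt0.
- by case/andP=> /indecomposable_dyckP[_ s_gt0 _] _ _ /(f_equal size);
    rewrite size_cat; case: (size s) s_gt0.
case/andP=> ind_s iss /andP[ind_t itt] eq_st.
have eq_s := indecomposable_dyck_prefix ind_s ind_t eq_st.
move: eq_st; rewrite -eq_s => /(f_equal (drop (size s))).
by rewrite !drop_size_cat // => /(IHss _ iss itt) ->.
Qed.

Lemma take_flatten_indecomposable ss k :
  all indecomposable_dyck ss ->
  ups (take k (flatten ss)) <= downs (take k (flatten ss)) ->
  exists j, take k (flatten ss) = flatten (take j ss).
Proof.
elim: ss k => [| s ss IHss] k /=; first by exists 0.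
case/andP=> /indecomposable_dyckP[/dyckP[bal_s _] s_gt0 inner_s] iss.
rewrite take_cat; case: ltnP => [lt_ks | ge_ks].
  case: k lt_ks => [| k] lt_ks; first by exists 0; rewrite take0.
  by rewrite leqNgt inner_s ?lt_ks.
rewrite !count_cat bal_s leq_add2l => /(IHss _ iss)[j eq_j].
by exists j.+1; rewrite eq_j.
Qed.

(* Split off the prefix ending at the first return to height 0. *)
Lemma dyck_factorization v :
  dyck v -> exists2 ss, all indecomposable_dyck ss & flatten ss = v.
Proof.
have [m] := ubnP (size v); elim: m v => // m IHm v /ltnSE le_vm dv.
have [/size0nil -> | v_gt0] := posnP (size v); first by exists [::].
have /dyckP[bal_v pre_v] := dv.
pose return0 i := (0 < i) && (ups (take i v) == downs (take i v)).
have return0_v : return0 (size v) by rewrite /return0 take_size bal_v eqxx v_gt0.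
case: (ex_minnP (ex_intro return0 _ return0_v)) => i /andP[i_gt0 /eqP bal_i] min_i.
have le_iv := min_i _ return0_v.
have first_factor : indecomposable_dyck (take i v).
  apply/indecomposable_dyckP; split=> [|| j].
  - by apply/dyckP; split=> // j; rewrite -take_min.
  - by rewrite size_takel.
  rewrite size_takel // => /andP[j_gt0 lt_ji].
  rewrite take_takel ?(ltnW lt_ji) // ltn_neqAle pre_v andbT.
  apply: contraTneq lt_ji => bal_j; rewrite -leqNgt; apply: min_i.
  by rewrite /return0 j_gt0 bal_j eqxx.
have rest_dyck : dyck (drop i v).
  apply/dyckP; split.
    by move: bal_v; rewrite -{1 2}(cat_take_drop i v) !count_cat bal_i; lia.
  by move=> j; have := pre_v (i + j); rewrite takeD !count_cat bal_i leq_add2l.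
have [|ss iss flatten_ss] := IHm (drop i v) _ rest_dyck; first by rewrite size_drop; lia.
by exists (take i v :: ss); rewrite /= ?first_factor // flatten_ss cat_take_drop.
Qed.

(* Cycle lemma: rotate to a point of minimal height [ups - downs]; the height
   is shifted by [size w] to avoid truncated subtraction. *)
Lemma balanced_rot_dyck w :
  ups w = downs w -> exists2 k, k <= size w & dyck (rot k w).
Proof.
move=> bal.
pose shifted_height (i : 'I_(size w).+1) :=
  ups (take i w) + (size w - downs (take i w)).
have [k _ min_k] := arg_minnP (P := xpredT) shifted_height (i0 := ord0) isT.
have downs_le i : downs (take i w) <= size w.
  by rewrite (leq_trans (count_size _ _)) // size_take_min geq_minr.
have min_height i : i <= size w ->
    ups (take k w) + downs (take i w) <= ups (take i w) + downs (take k w).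
  move=> le_iw; have := min_k (Ordinal (le_iw : i < (size w).+1)) isT.
  rewrite /shifted_height /=; have := downs_le i; have := downs_le k; lia.
have le_kw : k <= size w by rewrite -ltnS ltn_ord.
have split_bal := bal; rewrite -(cat_take_drop k w) !count_cat in split_bal.
exists k => //; apply/dyckP; split.
  by rewrite /rot !count_cat; lia.
move=> i; rewrite /rot take_cat size_drop; case: ltnP => lt_i.
  by have := min_height (k + i) ltac:(lia); rewrite takeD !count_cat; lia.
rewrite -take_min !count_cat.
have := min_height (minn (i - (size w - k)) k) (leq_trans (geq_minr _ _) le_kw).
lia.
Qed.

Lemma rot_flatten_indecomposable ss tt k :
  all indecomposable_dyck ss -> all indecomposable_dyck tt ->
  rot k (flatten ss) = flatten tt -> exists j, rot j ss = tt.
Proof.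
move=> iss itt rot_st.
have /dyckP[bal_s _] := dyck_flatten iss.
have /dyckP[_ pre_t] := dyck_flatten itt.
have cut_low : ups (take k (flatten ss)) <= downs (take k (flatten ss)).
  have := pre_t (size (drop k (flatten ss))).
  rewrite -rot_st /rot take_size_cat //.
  move: bal_s; rewrite -{1 2}(cat_take_drop k (flatten ss)) !count_cat; lia.
have [j take_j] := take_flatten_indecomposable iss cut_low.
have drop_j : drop k (flatten ss) = flatten (drop j ss).
  move: (cat_take_drop k (flatten ss)); rewrite take_j.
  rewrite -[X in _ = flatten X](cat_take_drop j ss) flatten_cat.
  by move/eqP; rewrite eqseq_cat // eqxx => /eqP.
exists j; apply: flatten_indecomposable_inj => //.
  by rewrite all_rot.
by rewrite -rot_st /rot drop_j take_j -flatten_cat.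
Qed.

Theorem mainTheorem2 (n : nat) (hn : 1 <= n) :
  (* the map ss |-> necklace of flatten ss is well defined on cyclic classes *)
  (forall ss tt : seq (seq bool), cyc_dyck_seq n ss -> cyc_eq ss tt ->
      cyc_dyck_seq n tt /\ cyc_eq (flatten ss) (flatten tt)) /\
  (* it lands in (1,1)-balanced necklaces of length 2n *)
  (forall ss, cyc_dyck_seq n ss ->
      balanced11 (flatten ss) /\ size (flatten ss) = 2 * n) /\
  (* injective on cyclic classes *)
  (forall ss tt, cyc_dyck_seq n ss -> cyc_dyck_seq n tt ->
      cyc_eq (flatten ss) (flatten tt) -> cyc_eq ss tt) /\
  (* surjective onto (1,1)-balanced necklaces of length 2n *)
  (forall w : seq bool, size w = 2 * n -> balanced11 w ->
      exists2 ss, cyc_dyck_seq n ss & cyc_eq (flatten ss) w).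
Proof.
split; [|split; [|split]].
- move=> ss _ [ss_nil iss size_ss] [k <-].
  split; [split | by rewrite flatten_rot; eexists].
  + by rewrite -size_eq0 size_rot size_eq0.
  + by rewrite all_rot.
  + by rewrite flatten_rot size_rot.
- by move=> ss [_ /dyck_flatten/dyckP[bal _] size_ss]; split=> //; apply/eqP.
- by move=> ss tt [_ iss _] [_ itt _] [k]; apply: rot_flatten_indecomposable.
- move=> w size_w /eqP bal.
  have [k le_kw /dyck_factorization[ss iss flatten_ss]] := balanced_rot_dyck bal.
  exists ss; last by exists (size w - k); rewrite flatten_ss -(size_rot k w); exact: rotK.
  split=> //; last by rewrite flatten_ss size_rot.
  apply: contraTneq hn => ss_nil.
  by move: flatten_ss; rewrite ss_nil => /(congr1 size); rewrite size_rot size_w /=; lia.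
Qed.
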